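(* For every $k\ge1$ there is a canonical isomorphism $\operatorname{coker}\beta^{(k)}\cong\mathcal I^kH^2(C)/\mathcal I^{k+1}H^2(C)$.
   Context: Let $\mathcal R$ be a (possibly non-commutative) ring, $\mathcal I\subset\mathcal R$ a two-sided ideal, and $C=[C^1\xrightarrow{d}C^2]$ a complex of left $\mathcal R$-modules concentrated in degrees 1 and 2, so $H^2(C)=\operatorname{coker}d$. The filtration $\{\mathcal I^iC\}_{i\ge0}$ gives a spectral sequence with $Z_k^{i,j}=\ker(\mathcal I^iC^{i+j}\xrightarrow{d}C^{i+j+1}/\mathcal I^{i+k}C^{i+j+1})$, $B_k^{i,j}=\mathcal I^iC^{i+j}\cap d(\mathcal I^{i-k}C^{i+j-1})$ ($\mathcal I^m=\mathcal R$ for $m\le0$), $E_k^{i,j}=Z_k^{i,j}/(Z_{k-1}^{i+1,j-1}+B_{k-1}^{i,j})$, differentials $d_k^{i,j}:E_k^{i,j}\to E_k^{i+k,j+1-k}$ induced by $d$. The $k$-th derived Bockstein map is $\beta^{(k)}=d_k^{0,1}:E_k^{0,1}\to E_k^{k,2-k}$. *)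

From HB Require Import structures.
From mathcomp Require Import all_boot all_order all_algebra.
Set Implicit Arguments. Unset Strict Implicit. Unset Printing Implicit Defensive.
Import GRing.Theory.
Local Open Scope ring_scope.

(* Subsets are Prop-valued predicates (submodules of non-noetherian modules
   need not be decidable). *)
Definition pset (T : Type) := T -> Prop.

Definition two_sided_ideal (R : pzRingType) (I : pset R) : Prop :=
  [/\ I 0,
      (forall a b, I a -> I b -> I (a - b)),
      (forall r a, I a -> I (r * a)) &
      (forall r a, I a -> I (a * r))].

Fixpoint Ipow (R : pzRingType) (I : pset R) (n : nat) : pset R :=
  match n with
  | 0%N => fun _ => True
  | n'.+1 => fun x => exists s : seq (R * R),
      (forall p, p \in s -> Ipow I n' p.1 /\ I p.2) /\
      x = \sum_(p <- s) (p.1 * p.2)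
  end.

Definition IpowZ (R : pzRingType) (I : pset R) (m : int) : pset R :=
  match m with
  | Posz n => Ipow I n
  | Negz _ => fun _ => True
  end.

Definition IM (R : pzRingType) (I : pset R) (V : lmodType R) (m : int)
    (S : pset V) : pset V :=
  fun x => exists s : seq (R * V),
    (forall p, p \in s -> IpowZ I m p.1 /\ S p.2) /\
    x = \sum_(p <- s) (p.1 *: p.2).

Definition psum (V : zmodType) (A B : pset V) : pset V :=
  fun x => exists a b, A a /\ B b /\ x = a + b.
Definition pimg (U V : Type) (f : U -> V) (A : pset U) : pset V :=
  fun y => exists x, A x /\ y = f x.

(* The complex C = [C^1 --d--> C^2] is realised inside the ambient module   *)
(* T = C^1 x C^2: the degree-n piece C^n is a submodule of T (C^1 = C1 x 0, *)
(* C^2 = 0 x C2, C^n = 0 otherwise) and the differential is                 *)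
(* D (x, y) = (0, d x), which maps C^n to C^(n+1) for every n.              *)
Definition Cdeg (R : pzRingType) (C1 C2 : lmodType R) (n : int) :
    pset (C1 * C2)%type :=
  fun x => if n == 1 then x.2 = 0
           else if n == 2 then x.1 = 0
           else x = 0.

Definition Dt (R : pzRingType) (C1 C2 : lmodType R) (d : {linear C1 -> C2})
    (x : (C1 * C2)%type) : (C1 * C2)%type := (0, d x.1).

Definition Zt (R : pzRingType) (I : pset R) (C1 C2 : lmodType R)
    (d : {linear C1 -> C2}) (k i j : int) : pset (C1 * C2)%type :=
  fun x => IM I i (@Cdeg R C1 C2 (i + j)) x /\
           IM I (i + k) (@Cdeg R C1 C2 (i + j + 1)) (Dt d x).

Definition Bt (R : pzRingType) (I : pset R) (C1 C2 : lmodType R)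
    (d : {linear C1 -> C2}) (k i j : int) : pset (C1 * C2)%type :=
  fun x => IM I i (@Cdeg R C1 C2 (i + j)) x /\
           pimg (Dt d) (IM I (i - k) (@Cdeg R C1 C2 (i + j - 1))) x.

(* A subquotient N / D of a module V, presented by the submodule N of       *)
(* representatives and the submodule D: two representatives x, y in N      *)
(* define the same element iff x - y \in D (i.e. N/(N cap D)).              *)
Record subq (V : Type) := SubQ { sq_num : pset V; sq_den : pset V }.

Definition Et (R : pzRingType) (I : pset R) (C1 C2 : lmodType R)
    (d : {linear C1 -> C2}) (k i j : int) : subq (C1 * C2)%type :=
  SubQ (Zt I d k i j)
       (psum (Zt I d (k - 1) (i + 1) (j - 1)) (Bt I d (k - 1) i j)).

Definition coker_sq (V : Type) (W : zmodType) (f : V -> W) (P : subq V) (Q : subq W)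
    : subq W :=
  SubQ (sq_num Q)
       (fun y => sq_num Q y /\ exists z, sq_num P z /\ sq_den Q (y - f z)).

Definition Ipow_sq (R : pzRingType) (I : pset R) (V : lmodType R) (m : int)
    (P : subq V) : pset V :=
  fun x => sq_num P x /\ exists s : seq (R * V),
    (forall p, p \in s -> IpowZ I m p.1 /\ sq_num P p.2) /\
    sq_den P (x - \sum_(p <- s) (p.1 *: p.2)).

Definition induces_iso (R : pzRingType) (V W : lmodType R) (f : V -> W)
    (P : subq V) (Q : subq W) : Prop :=
  [/\ (forall (a : R) (x y : V), f (a *: x + y) = a *: f x + f y),
      (forall x, sq_num P x -> sq_num Q (f x)),
      (forall x, sq_num P x -> sq_den P x -> sq_den Q (f x)),
      (forall x, sq_num P x -> sq_den Q (f x) -> sq_den P x) &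
      (forall y, sq_num Q y -> exists x, sq_num P x /\ sq_den Q (y - f x))].

Definition Csq (R : pzRingType) (C1 C2 : lmodType R) (n : int)
    : subq (C1 * C2)%type :=
  SubQ (@Cdeg R C1 C2 n) (fun x => x = 0).

Definition H2 (R : pzRingType) (C1 C2 : lmodType R) (d : {linear C1 -> C2})
    : subq (C1 * C2)%type :=
  coker_sq (Dt d) (@Csq R C1 C2 1) (@Csq R C1 C2 2).

Definition coker_beta (R : pzRingType) (I : pset R) (C1 C2 : lmodType R)
    (d : {linear C1 -> C2}) (k : int) : subq (C1 * C2)%type :=
  coker_sq (Dt d) (Et I d k 0 1) (Et I d k k (2 - k)).

Definition graded_H2 (R : pzRingType) (I : pset R) (C1 C2 : lmodType R)
    (d : {linear C1 -> C2}) (k : int) : subq (C1 * C2)%type :=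
  SubQ (Ipow_sq I k (H2 d)) (Ipow_sq I (k + 1) (H2 d)).

(* Everything is a quotient of I^k C^2.  As C^3 = 0 and d vanishes on C^2,
   coker beta^(k) is I^k C^2 modulo I^(k+1) C^2 + (I^k C^2 cap dC^1): the
   pages only remember which boundaries lie in I^k C^2.  On the other side
   I^m H^2 lifts to I^m C^2 + dC^1, so I^k H^2 / I^(k+1) H^2 is
   (I^k C^2 + dC^1) / (I^(k+1) C^2 + dC^1).  The inclusion of I^k C^2 is onto
   this quotient and, by the modular law (I^(k+1) C^2 is contained in
   I^k C^2), its kernel I^k C^2 cap (I^(k+1) C^2 + dC^1) is exactly
   I^(k+1) C^2 + (I^k C^2 cap dC^1). *)
From HB Require Import structures.
From mathcomp Require Import all_boot all_order all_algebra.
From mathcomp Require Import zify.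
Set Implicit Arguments. Unset Strict Implicit. Unset Printing Implicit Defensive.
Import GRing.Theory.
Local Open Scope ring_scope.

Section IdealPowers.
Variables (R : pzRingType) (I : pset R).
Hypothesis hI : two_sided_ideal I.

Lemma Ipow0 n : Ipow I n 0.
Proof. by case: n => [//|n]; exists [::]; rewrite big_nil. Qed.

Lemma IpowD n a b : Ipow I n a -> Ipow I n b -> Ipow I n (a + b).
Proof.
case: n => [//|n] [s [hs ->]] [t [ht ->]].
exists (s ++ t); split; last by rewrite big_cat.
by move=> p; rewrite mem_cat => /orP [/hs|/ht].
Qed.

Lemma IpowMr n a r : Ipow I n a -> Ipow I n (a * r).
Proof.
case: hI => _ _ _ hIr; case: n => [//|n] [s [hs ->]].
exists [seq (p.1, p.2 * r) | p <- s]; split.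
  by move=> p /mapP [q /hs [? ?] ->]; split => //; apply: hIr.
by rewrite big_map mulr_suml; apply: eq_bigr => p _; rewrite mulrA.
Qed.

Lemma Ipow_succ n a : Ipow I n.+1 a -> Ipow I n a.
Proof.
case: n => [//|n] [s [hs ->]].
elim: s hs => [|p s IHs] hs; first by rewrite big_nil; apply: Ipow0.
rewrite big_cons; apply: IpowD.
  by have [? _] := hs p (mem_head _ _); apply: IpowMr.
by apply: IHs => q hq; apply: hs; rewrite in_cons hq orbT.
Qed.

Lemma IpowZ_succ (m : int) a : IpowZ I (m + 1) a -> IpowZ I m a.
Proof. by case: m => [n|n] //=; rewrite addn1; apply: Ipow_succ. Qed.

End IdealPowers.

Definition is_submodule (R : pzRingType) (V : lmodType R) (P : pset V) :=
  P 0 /\ forall a u v, P u -> P v -> P (a *: u + v).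

Section Filtration.
Variables (R : pzRingType) (I : pset R) (V : lmodType R).
Implicit Types (S P : pset V) (m : int).

Lemma submoduleN P v : is_submodule P -> P v -> P (- v).
Proof. by case=> P0 PZD Pv; rewrite -scaleN1r -[_ *: v]addr0; apply: PZD. Qed.

Lemma submoduleD P u v : is_submodule P -> P u -> P v -> P (u + v).
Proof. by case=> _ PZD Pu Pv; rewrite -[u]scale1r; apply: PZD. Qed.

Lemma IM0 m S : IM I m S 0.
Proof. by exists [::]; rewrite big_nil. Qed.

Lemma IM0_refl S x : S x -> IM I 0 S x.
Proof.
move=> Sx; exists [:: (1, x)]; rewrite big_seq1 scale1r.
by split=> // p /[!inE] /eqP->.
Qed.

Lemma IM_sub m S x y :
  (forall v, S v -> S (- v)) -> IM I m S x -> IM I m S y -> IM I m S (x - y).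
Proof.
move=> SN [s [hs ->]] [t [ht ->]].
exists (s ++ [seq (p.1, - p.2) | p <- t]); split.
  move=> p; rewrite mem_cat => /orP [/hs //|/mapP [q /ht [? ?] ->]].
  by split => //; apply: SN.
rewrite big_cat big_map -sumrN; congr (_ + _).
by apply: eq_bigr => p _; rewrite scalerN.
Qed.

Lemma IM_succ m S x : two_sided_ideal I -> IM I (m + 1) S x -> IM I m S x.
Proof.
move=> hI [s [hs ->]]; exists s; split => // p /hs [? ?].
by split => //; apply: IpowZ_succ.
Qed.

Lemma IM_le_submodule m S P :
  is_submodule P -> (forall v, S v -> P v) -> forall x, IM I m S x -> P x.
Proof.
move=> [P0 PZD] SP _ [s [hs ->]]; elim: s hs => [|p s IHs] hs.
  by rewrite big_nil.
have [_ /SP Pp] := hs p (mem_head _ _).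
rewrite big_cons; apply: PZD => //.
by apply: IHs => q hq; apply: hs; rewrite in_cons hq orbT.
Qed.

End Filtration.

Section TwoTermComplex.
Variables (R : pzRingType) (I : pset R) (C1 C2 : lmodType R).
Variable d : {linear C1 -> C2}.
Implicit Types (x y z : (C1 * C2)%type) (m : int).

Lemma is_submodule_Cdeg n : is_submodule (@Cdeg R C1 C2 n).
Proof.
rewrite /Cdeg; case: (n == 1); last case: (n == 2);
  by split=> // a u v /= -> ->; rewrite scaler0 addr0.
Qed.

Lemma IM_Cdeg m n x : IM I m (@Cdeg R C1 C2 n) x -> Cdeg n x.
Proof. exact: IM_le_submodule (is_submodule_Cdeg n) _ x. Qed.

Lemma CdegN n x : Cdeg n x -> @Cdeg R C1 C2 n (- x).
Proof. exact: submoduleN (is_submodule_Cdeg n). Qed.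

Lemma Dt_Cdeg2_eq0 x : Cdeg 2 x -> Dt d x = 0.
Proof. by rewrite /Cdeg /Dt /= => ->; rewrite linear0. Qed.

Lemma Dt_in_Cdeg2 x : Cdeg 2 (Dt d x).
Proof. by []. Qed.

Lemma DtD x y : Dt d (x + y) = Dt d x + Dt d y.
Proof. by rewrite /Dt /= linearD; congr (_, _); rewrite addr0. Qed.

Definition IC2_plus_dC1 m x :=
  exists y z, IM I m (Cdeg 2) y /\ Cdeg 1 z /\ x = y + Dt d z.

Lemma Ipow_sq_H2 m x : Ipow_sq I m (H2 d) x <-> IC2_plus_dC1 m x.
Proof.
split.
  move=> [_ [s [hs [_ [z [hz hxz]]]]]].
  exists (\sum_(p <- s) p.1 *: p.2), z; split; first by exists s.
  by split=> //; apply/eqP; rewrite -subr_eq0 opprD addrA hxz.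
move=> [_ [z [[s [hs ->]] [hz ->]]]].
set y := \sum_(p <- s) _.
have hy : IM I m (Cdeg 2) y by exists s.
split.
  exact: submoduleD (is_submodule_Cdeg 2) (IM_Cdeg hy) (Dt_in_Cdeg2 z).
exists s; split => //.
have -> : y + Dt d z - y = Dt d z by rewrite addrAC subrr add0r.
by split=> //; exists z; rewrite subrr.
Qed.

Variable k : int.

Lemma coker_beta_num x : sq_num (coker_beta I d k) x <-> IM I k (Cdeg 2) x.
Proof.
rewrite /= /Zt; have -> : k + (2 - k) = 2 by lia.
split=> [[] //|hx]; split=> //.
by rewrite Dt_Cdeg2_eq0; [apply: IM0 | apply: IM_Cdeg hx].
Qed.

Lemma coker_beta_den x : two_sided_ideal I ->
  sq_den (coker_beta I d k) x <-> IM I k (Cdeg 2) x /\ IC2_plus_dC1 (k + 1) x.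
Proof.
move=> hI; rewrite /= -[Zt I d k k _ x]/(sq_num (coker_beta I d k) x).
rewrite coker_beta_num /Zt /Bt.
have -> : k + 1 + (2 - k - 1) = 2 by lia.
have -> : k - (k - 1) = 1 by lia.
have -> : k + (2 - k) - 1 = 1 by lia.
have -> : k + (2 - k) = 2 by lia.
have -> : 0 + 1 + 1 = 2 :> int by [].
rewrite !add0r; split=> -[hx hbd]; split=> //.
  move: hbd => [z [[/IM_Cdeg hz _] [a [_ [[ha _] [[_ [z' [hz' ->]]] hxz]]]]]].
  move/IM_Cdeg: hz' => hz'.
  exists a, (z + z'); do 2!split=> //.
    exact: submoduleD (is_submodule_Cdeg 1) hz hz'.
  by rewrite DtD addrCA -hxz addrC subrK.
move: hbd => [a [z [ha [hz hxaz]]]].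
have a1 : Cdeg 2 a := IM_Cdeg ha.
exists z; split.
  split; first exact: IM0_refl.
  have -> : Dt d z = x - a by rewrite hxaz addrC addKr.
  by apply: IM_sub => //; [apply: CdegN | apply: IM_succ hI ha].
exists a, 0; split; first by split=> //; rewrite (Dt_Cdeg2_eq0 a1); apply: IM0.
split; last by rewrite addr0 hxaz addrK.
by split; [apply: IM0 | exists 0; split; [apply: IM0 | rewrite Dt_Cdeg2_eq0]].
Qed.

Theorem coker_beta_iso_graded_H2 : two_sided_ideal I ->
  induces_iso (@idfun (C1 * C2)%type) (coker_beta I d k) (graded_H2 I d k).
Proof.
move=> hI; split=> //=.
- move=> x /coker_beta_num hx; apply/Ipow_sq_H2.
  by exists x, 0; rewrite Dt_Cdeg2_eq0 ?addr0.
- by move=> x _ /(coker_beta_den _ hI) [_ /Ipow_sq_H2].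
- by move=> x /coker_beta_num hx /Ipow_sq_H2 hbd; apply/coker_beta_den.
- move=> y /Ipow_sq_H2 [a [z [ha [hz ->]]]].
  exists a; split; first exact/coker_beta_num.
  apply/Ipow_sq_H2; exists 0, z; rewrite addrAC subrr !add0r.
  by split=> //; apply: IM0.
Qed.

End TwoTermComplex.

Theorem propositionA8 (R : pzRingType) (I : pset R) (C1 C2 : lmodType R)
    (d : {linear C1 -> C2}) (k : nat) :
  two_sided_ideal I -> (1 <= k)%N ->
  induces_iso (@idfun (C1 * C2)%type)
              (coker_beta I d k) (graded_H2 I d k).
Proof. by move=> hI _; apply: coker_beta_iso_graded_H2. Qed.
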